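(* For every positive integer $n$ and odd $k\ge3$, $$\delta_kc_n^{\mathfrak a}=-\frac{T^k}{k}\big[n^k-(n-1)^k-1\big]c_n^{\mathfrak a}.$$
   Context: $\mathcal M^{(1)}=\mathbb Q[\zeta^{\mathfrak a}(3),\zeta^{\mathfrak a}(5),\dots]$ is the free polynomial subalgebra of depth-one motivic MZVs in $\mathcal A=\mathcal H/\zeta^{\mathfrak m}(2)\mathcal H$; $\zeta^{\mathfrak a}(k)=0$ for even $k$. For odd $k\ge3$, $\delta_k$ is the continuous $\mathbb Q((T))$-linear derivation $\partial/\partial\zeta^{\mathfrak a}(k)$ of $\mathcal M^{(1)}((T))$. $H^{\mathfrak a}(n)=(-1)^n\sum_{j\ge1}\binom{n+j-1}{n-1}\zeta^{\mathfrak a}(n+j)T^j$; $H^{\mathfrak a}(1^0)=1$, $H^{\mathfrak a}(1^n)=\frac1n\sum_{i=1}^n(-1)^{i-1}H^{\mathfrak a}(i)H^{\mathfrak a}(1^{n-i})$; $c_n^{\mathfrak a}=n\sum_{j\ge0}(n-1)^jT^jH^{\mathfrak a}(1^j)$. *)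

From HB Require Import structures.
From mathcomp Require Import all_boot all_order all_algebra.
Set Implicit Arguments. Unset Strict Implicit. Unset Printing Implicit Defensive.
Import Order.TTheory GRing.Theory Num.Theory.
Local Open Scope ring_scope.

(* The free polynomial algebra M1 = Q[z_3, z_5, z_7, ...], z_m standing for
   zeta^a(m).  Since multivariate polynomials are not available, an element
   is represented by a formal (unnormalised) finite sum of terms c * mon,
   where a monomial is a finite multiset of variable indices (a seq nat,
   considered up to permutation).  Two representations denote the same
   polynomial iff all their monomial coefficients [mcoef] agree ([meq]);
   M1 is the quotient of [mpoly] by [meq]. *)
Definition mono := seq nat.
Definition mpoly := seq (rat * mono).

Definition mcoef (p : mpoly) (m : mono) : rat :=
  \sum_(t <- p | perm_eq t.2 m) t.1.
Definition meq (p q : mpoly) : Prop := forall m, mcoef p m = mcoef q m.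

Definition mzero : mpoly := [::].
Definition mone : mpoly := [:: (1, [::])].
Definition madd (p q : mpoly) : mpoly := p ++ q.
Definition mscale (c : rat) (p : mpoly) : mpoly := [seq (c * t.1, t.2) | t <- p].
Definition mmul (p q : mpoly) : mpoly :=
  [seq (a.1 * b.1, a.2 ++ b.2) | a <- p, b <- q].
Definition msum (s : seq mpoly) : mpoly := flatten s.

Definition zeta_a (m : nat) : mpoly :=
  if odd m && (2 < m)%N then [:: (1, [:: m])] else mzero.

(* delta_k = d / d z_k on M1 (k odd >= 3). *)
Definition mderiv (k : nat) (p : mpoly) : mpoly :=
  [seq ((count_mem k t.2)%:R * t.1, rem k t.2) | t <- p].

(* Formal power series M1[[T]] (all series occurring here have only
   nonnegative powers of T) : coefficient sequences. *)
Definition pser := nat -> mpoly.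
Definition ps_eq (f g : pser) : Prop := forall i, meq (f i) (g i).
Definition ps_zero : pser := fun _ => mzero.
Definition ps_one : pser := fun i => if i == 0%N then mone else mzero.
Definition ps_add (f g : pser) : pser := fun i => madd (f i) (g i).
Definition ps_scale (c : rat) (f : pser) : pser := fun i => mscale c (f i).
Definition ps_mul (f g : pser) : pser :=
  fun i => msum [seq mmul (f j) (g (i - j)%N) | j <- iota 0 i.+1].
Definition ps_Tpow (k : nat) (f : pser) : pser :=
  fun i => if (k <= i)%N then f (i - k)%N else mzero.
(* continuous Q((T))-linear extension of delta_k *)
Definition ps_deriv (k : nat) (f : pser) : pser := fun i => mderiv k (f i).

Definition Ha (n : nat) : pser :=
  fun j => if j == 0%N then mzero
           else mscale ((-1) ^+ n * ('C(n + j - 1, n - 1))%:R) (zeta_a (n + j)).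

Fixpoint H1seq (n : nat) : seq pser :=
  match n with
  | 0 => [:: ps_one]
  | n'.+1 =>
      let s := H1seq n' in
      rcons s (ps_scale (n'.+1%:R)^-1
        (foldr ps_add ps_zero
          [seq ps_scale ((-1) ^+ (i - 1)) (ps_mul (Ha i) (nth ps_zero s (n'.+1 - i)))
          | i <- iota 1 n'.+1]))
  end.
Definition H1 (n : nat) : pser := nth ps_zero (H1seq n) n.

(* c_n^a = n sum_{j>=0} (n-1)^j T^j H^a(1^j); the coefficient of T^i only
   involves j <= i. *)
Definition cn (n : nat) : pser :=
  fun i => mscale n%:R
    (msum [seq mscale ((n%:R - 1) ^+ j) (H1 j (i - j)%N) | j <- iota 0 i.+1]).

From HB Require Import structures.
From mathcomp Require Import all_boot all_algebra generic_quotient ring zify.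
Set Implicit Arguments. Unset Strict Implicit. Unset Printing Implicit Defensive.
Import GRing.Theory Num.Theory.
Local Open Scope ring_scope.

(* Pass to the ring [M1] of polynomials modulo [meq] and compare power
   series through their truncations modulo [T^N]; [delta_k] becomes a derivation of
   [{poly M1}].  Since [delta_k zeta(m) = (m == k)],
     delta_k H(i) = (-1)^i binom(k-1, i-1) T^(k-i)   for 0 < i < k,
   and [delta_k H(i) = 0] for [i >= k].  Differentiating Newton's recursion
   [j H(1^j) = sum_i (-1)^(i-1) H(i) H(1^(j-i))] and using the recursion once more
   on the terms [H(i) delta_k H(1^(j-i))] gives, by induction on [j],
     delta_k H(1^j) = - sum_(1 <= l < k) binom(k, l)/k T^(k-l) H(1^(j-l)).
   Substituting into [c_n = n sum_j (n-1)^j T^j H(1^j)] and shifting [j] by [l]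
   yields [delta_k c_n = - T^k c_n sum_(1 <= l < k) binom(k, l)/k (n-1)^l], and the
   binomial theorem evaluates the sum as [(n^k - (n-1)^k - 1)/k]. *)

Lemma mcoefE p m : mcoef p m = \sum_(t <- p) t.1 * (perm_eq t.2 m)%:R.
Proof.
rewrite /mcoef big_mkcond; apply: eq_bigr => t _.
by case: ifP => _; rewrite ?mulr1 ?mulr0.
Qed.

Lemma mcoef0 m : mcoef mzero m = 0.
Proof. exact: big_nil. Qed.

Lemma mcoef_cat p q m : mcoef (p ++ q) m = mcoef p m + mcoef q m.
Proof. exact: big_cat. Qed.

Lemma mcoef_scale c p m : mcoef (mscale c p) m = c * mcoef p m.
Proof. by rewrite /mcoef big_map big_distrr. Qed.

Lemma mcoef_mmul p q m : mcoef (mmul p q) m =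
  \sum_(a <- p) \sum_(b <- q) a.1 * b.1 * (perm_eq (a.2 ++ b.2) m)%:R.
Proof. by rewrite mcoefE big_allpairs_dep. Qed.

Lemma mcoef_perm p m m' : perm_eq m m' -> mcoef p m = mcoef p m'.
Proof. by move=> /permPr mm'; apply: eq_bigl => t; rewrite mm'. Qed.

Lemma meq_sym p q : meq p q -> meq q p. Proof. by move=> pq m. Qed.
Lemma meq_trans p q r : meq p q -> meq q r -> meq p r.
Proof. by move=> pq qr m; rewrite pq. Qed.

(* [meq]-equivalent representations have the same pairing with every
   permutation-invariant function; this is how [mmul] and [mderiv] are shown to be
   compatible with [meq]. *)
Definition mpair (p : mpoly) (g : mono -> rat) : rat := \sum_(t <- p) t.1 * g t.2.
Definition perm_invariant (g : mono -> rat) := forall x y, perm_eq x y -> g x = g y.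

Lemma perm_eq_sort (x y : mono) : perm_eq x y = (sort leq x == sort leq y).
Proof. exact/esym/(sameP eqP (perm_sortP leq_total leq_trans anti_leq x y)). Qed.

Lemma sort_leq_idem (x : mono) : sort leq (sort leq x) = sort leq x.
Proof. exact/sorted_sort/sort_sorted/leq_total/leq_trans. Qed.

Lemma mpair_mcoef p g (U : seq mono) : perm_invariant g -> uniq U ->
  (forall t, t \in p -> sort leq t.2 \in U) ->
  (forall u, u \in U -> sort leq u = u) ->
  mpair p g = \sum_(u <- U) g u * mcoef p u.
Proof.
move=> g_inv Uuniq pU Usorted.
have gE t : t \in p -> g t.2 = \sum_(u <- U) (perm_eq t.2 u)%:R * g u.
  move=> tp; rewrite (bigD1_seq (sort leq t.2)) ?pU //=.
  rewrite perm_eq_sort sort_leq_idem eqxx mul1r (g_inv _ (sort leq t.2)); last first.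
    by rewrite perm_eq_sort sort_leq_idem.
  rewrite big_seq_cond big1 ?addr0 // => u /andP[uU u_neq].
  by rewrite perm_eq_sort (Usorted u uU) eq_sym (negPf u_neq) mul0r.
rewrite /mpair big_seq_cond (eq_bigr (fun t => t.1 * \sum_(u <- U) (perm_eq t.2 u)%:R * g u));
  last by move=> t /andP[tp _]; rewrite gE.
rewrite -big_seq_cond; under eq_bigr do rewrite big_distrr.
rewrite exchange_big /=; apply: eq_bigr => u _.
by rewrite mcoefE big_distrr /=; apply: eq_bigr => t _; rewrite mulrA mulrC.
Qed.

Lemma meq_mpair p q g : meq p q -> perm_invariant g -> mpair p g = mpair q g.
Proof.
move=> pq g_inv; set U := undup [seq sort leq t.2 | t <- p ++ q].
have Usorted u : u \in U -> sort leq u = u.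
  by rewrite mem_undup => /mapP[t _ ->]; rewrite sort_leq_idem.
have inU t : t \in p ++ q -> sort leq t.2 \in U.
  by move=> tpq; rewrite mem_undup; apply/mapP; exists t.
rewrite (@mpair_mcoef p g U) ?(@mpair_mcoef q g U) ?undup_uniq //.
- by apply: eq_bigr => u _; rewrite pq.
- by move=> t tq; rewrite inU // mem_cat tq orbT.
- by move=> t tp; rewrite inU // mem_cat tp.
Qed.

Lemma mcoef_mmul_pair p q m : mcoef (mmul p q) m =
  mpair p (fun x => \sum_(b <- q) b.1 * (perm_eq (x ++ b.2) m)%:R).
Proof.
rewrite mcoef_mmul; apply: eq_bigr => a _; rewrite big_distrr.
by apply: eq_bigr => b _; rewrite /= mulrA.
Qed.

Lemma mmulC p q : meq (mmul p q) (mmul q p).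
Proof.
move=> m; rewrite !mcoef_mmul exchange_big; apply: eq_bigr => b _.
apply: eq_bigr => a _; rewrite (mulrC a.1 b.1).
by rewrite (perm_catC a.2 b.2).
Qed.

Lemma mmul_congl p p' q : meq p p' -> meq (mmul p q) (mmul p' q).
Proof.
move=> pp' m; rewrite !mcoef_mmul_pair; apply: meq_mpair => // x y xy.
by apply: eq_bigr => b _; rewrite (permPl (perm_cat xy (perm_refl b.2))).
Qed.

Lemma mmul_congr p q q' : meq q q' -> meq (mmul p q) (mmul p q').
Proof.
move=> qq'; apply: meq_trans (mmulC _ _) _; apply: meq_trans (mmulC _ _).
exact: mmul_congl.
Qed.

Lemma mmulA p q r : meq (mmul p (mmul q r)) (mmul (mmul p q) r).
Proof.
move=> m; rewrite !mcoef_mmul /mmul big_allpairs_dep /=.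
apply: eq_bigr => a _; rewrite big_allpairs_dep /=.
by apply: eq_bigr => b _; apply: eq_bigr => c _; rewrite catA !mulrA.
Qed.

Lemma mmulDl p p' q : meq (mmul (madd p p') q) (madd (mmul p q) (mmul p' q)).
Proof. by move=> m; rewrite mcoef_cat !mcoef_mmul big_cat. Qed.

Lemma madd_cong p p' q q' : meq p p' -> meq q q' -> meq (madd p q) (madd p' q').
Proof. by move=> pp' qq' m; rewrite !mcoef_cat pp' qq'. Qed.

Lemma maddC p q : meq (madd p q) (madd q p).
Proof. by move=> m; rewrite !mcoef_cat addrC. Qed.

Lemma maddN p : meq (madd (mscale (-1) p) p) mzero.
Proof. by move=> m; rewrite mcoef_cat mcoef_scale mulN1r addNr mcoef0. Qed.

Lemma mscale_cong c p p' : meq p p' -> meq (mscale c p) (mscale c p').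
Proof. by move=> pp' m; rewrite !mcoef_scale pp'. Qed.

Lemma mmul1 p : meq (mmul mone p) p.
Proof.
move=> m; rewrite mcoef_mmul big_seq1 mcoefE.
by apply: eq_bigr => b _; rewrite mul1r.
Qed.

(* Only monomials occurring in [p] or [q] can have nonzero coefficients. *)
Definition meqb (p q : mpoly) : bool :=
  all (fun x => mcoef p x == mcoef q x) [seq t.2 | t <- p ++ q].

Lemma meqP p q : reflect (meq p q) (meqb p q).
Proof.
apply: (iffP allP) => [pq m | pq x _]; last by rewrite pq.
have [/hasP[t tpq tm]|] := boolP (has (fun t => perm_eq t.2 m) (p ++ q)).
  rewrite -(mcoef_perm p tm) -(mcoef_perm q tm); apply/eqP/pq.
  by apply/mapP; exists t.
rewrite has_cat negb_or => /andP[/hasPn np /hasPn nq].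
have mcoef_out s : {in s, forall t, ~~ perm_eq t.2 m} -> mcoef s m = 0.
  move=> out; rewrite /mcoef big_seq_cond big1 // => t /andP[ts tm].
  by rewrite (negPf (out t ts)) in tm.
by rewrite !mcoef_out.
Qed.

Lemma meqb_refl : reflexive meqb. Proof. by move=> p; apply/meqP. Qed.
Lemma meqb_sym : symmetric meqb.
Proof. by move=> p q; apply/meqP/meqP; apply: meq_sym. Qed.
Lemma meqb_trans : transitive meqb.
Proof. by move=> q p r /meqP pq /meqP qr; apply/meqP; apply: meq_trans pq qr. Qed.
Canonical meqb_equiv := EquivRel meqb meqb_refl meqb_sym meqb_trans.

(** * The ring [M1] *)

Definition M1 := {eq_quot meqb}%qT.
HB.instance Definition _ : EqQuotient _ meqb M1 := EqQuotient.on M1.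
HB.instance Definition _ := Choice.on M1.

Local Notation pi := (\pi_M1)%qT.

Lemma eqpiP p q : pi p = pi q <-> meq p q.
Proof.
split=> [/(@eqquotP _ meqb_equiv M1)/meqP //|/meqP pq].
exact/(@eqquotP _ meqb_equiv M1).
Qed.

Lemma repr_meq p : meq (repr (pi p)) p.
Proof. by apply/eqpiP; rewrite reprK. Qed.

Definition M1add (x y : M1) : M1 := pi (madd (repr x) (repr y)).
Definition M1opp (x : M1) : M1 := pi (mscale (-1) (repr x)).
Definition M1mul (x y : M1) : M1 := pi (mmul (repr x) (repr y)).

Lemma pi_madd p q : pi (madd p q) = M1add (pi p) (pi q).
Proof. by apply/eqpiP/madd_cong; apply: meq_sym (repr_meq _). Qed.

Lemma pi_mopp p : pi (mscale (-1) p) = M1opp (pi p).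
Proof. by apply/eqpiP/mscale_cong/meq_sym/repr_meq. Qed.

Lemma pi_mmul p q : pi (mmul p q) = M1mul (pi p) (pi q).
Proof.
apply/eqpiP; apply: meq_trans (mmul_congl _ (meq_sym (repr_meq p))) _.
exact: mmul_congr (meq_sym (repr_meq q)).
Qed.

Lemma M1addA : associative M1add.
Proof.
elim/quotW=> x; elim/quotW=> y; elim/quotW=> z.
rewrite -(pi_madd y z) -(pi_madd x y) -(pi_madd x) -(pi_madd (madd x y)).
by apply/eqpiP => m; rewrite /madd catA.
Qed.

Lemma M1addC : commutative M1add.
Proof.
by elim/quotW=> x; elim/quotW=> y; rewrite -(pi_madd x y) -pi_madd; apply/eqpiP/maddC.
Qed.

Lemma M1add0 : left_id (pi mzero) M1add.
Proof. by elim/quotW=> x; rewrite -pi_madd. Qed.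

Lemma M1addN : left_inverse (pi mzero) M1opp M1add.
Proof. by elim/quotW=> x; rewrite -pi_mopp -pi_madd; apply/eqpiP/maddN. Qed.

HB.instance Definition _ := GRing.isZmodule.Build M1 M1addA M1addC M1add0 M1addN.

Lemma M1mulA : associative M1mul.
Proof.
elim/quotW=> x; elim/quotW=> y; elim/quotW=> z.
rewrite -(pi_mmul y z) -(pi_mmul x y) -(pi_mmul x) -(pi_mmul (mmul x y)).
exact/eqpiP/mmulA.
Qed.

Lemma M1mulC : commutative M1mul.
Proof.
by elim/quotW=> x; elim/quotW=> y; rewrite -(pi_mmul x y) -pi_mmul; apply/eqpiP/mmulC.
Qed.

Lemma M1mul1 : left_id (pi mone) M1mul.
Proof. by elim/quotW=> x; rewrite -pi_mmul; apply/eqpiP/mmul1. Qed.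

Lemma M1mulDl : left_distributive M1mul M1add.
Proof.
elim/quotW=> x; elim/quotW=> y; elim/quotW=> z.
rewrite -(pi_madd x y) -(pi_mmul (madd x y)) -(pi_mmul x z) -(pi_mmul y z).
by rewrite -(pi_madd (mmul x z)); apply/eqpiP/mmulDl.
Qed.

Lemma M1one_neq0 : pi mone != pi mzero.
Proof.
by apply/eqP => /eqpiP /(_ [::]) /eqP; rewrite mcoef0 mcoefE big_seq1 mulr1 oner_eq0.
Qed.

HB.instance Definition _ :=
  GRing.Zmodule_isComNzRing.Build M1 M1mulA M1mulC M1mul1 M1mulDl M1one_neq0.

Lemma piD p q : pi (madd p q) = pi p + pi q. Proof. exact: pi_madd. Qed.
Lemma piN p : pi (mscale (-1) p) = - pi p. Proof. exact: pi_mopp. Qed.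
Lemma piM p q : pi (mmul p q) = pi p * pi q. Proof. exact: pi_mmul. Qed.

Lemma pi_msum (s : seq mpoly) : pi (msum s) = \sum_(p <- s) pi p.
Proof. by elim: s => [|p s IHs]; rewrite ?big_nil // big_cons -IHs -piD. Qed.

Definition mconst (c : rat) : M1 := pi [:: (c, [::])].

Lemma mcoef_const c m : mcoef [:: (c, [::])] m = c * (perm_eq [::] m)%:R.
Proof. by rewrite mcoefE big_seq1. Qed.

Lemma pi_mscale c p : pi (mscale c p) = mconst c * pi p.
Proof.
rewrite -piM; apply/eqpiP => m; rewrite mcoef_scale mcoef_mmul big_seq1.
by rewrite mcoefE big_distrr; apply: eq_bigr => b _; rewrite /= mulrA.
Qed.

Lemma mconstD c d : mconst (c + d) = mconst c + mconst d.
Proof. by rewrite -piD; apply/eqpiP => m; rewrite mcoef_cat !mcoef_const mulrDl. Qed.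

Lemma mconstB : zmod_morphism mconst.
Proof.
by move=> c d; apply: (addIr (mconst d)); rewrite -mconstD !subrK.
Qed.
HB.instance Definition _ := GRing.isZmodMorphism.Build rat M1 mconst mconstB.

Lemma mconst_monoid : monoid_morphism mconst.
Proof. by split=> // c d; rewrite -piM; apply/eqpiP => m; rewrite mcoef_mmul. Qed.
HB.instance Definition _ := GRing.isMonoidMorphism.Build rat M1 mconst mconst_monoid.

Local Notation "c %:C" := (mconst c)%:P (at level 2, format "c %:C").

(** * The derivation [delta_k] *)

Lemma perm_rem (x : nat) (s1 s2 : mono) : perm_eq s1 s2 -> perm_eq (rem x s1) (rem x s2).
Proof.
move=> s12; have [xs1|xs1] := boolP (x \in s1); last first.
  by rewrite !rem_id // -(perm_mem s12).
have xs2 : x \in s2 by rewrite -(perm_mem s12).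
have xs1E : perm_eq (x :: rem x s1) s1 by rewrite perm_sym perm_to_rem.
by have := perm_trans (perm_trans xs1E s12) (perm_to_rem xs2); rewrite perm_cons.
Qed.

Lemma rem_cat (x : nat) (s1 s2 : mono) :
  rem x (s1 ++ s2) = if x \in s1 then rem x s1 ++ s2 else s1 ++ rem x s2.
Proof.
elim: s1 => [|y s1 IHs] //=; rewrite in_cons.
by case: (eqVneq y x) => //= _; rewrite IHs; case: ifP.
Qed.

Lemma mcoef_mderiv k p m : mcoef (mderiv k p) m =
  mpair p (fun x => (count_mem k x)%:R * (perm_eq (rem k x) m)%:R).
Proof. by rewrite mcoefE big_map; apply: eq_bigr => t _; rewrite /= mulrCA mulrA. Qed.

Lemma mderiv_cong k p q : meq p q -> meq (mderiv k p) (mderiv k q).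
Proof.
move=> pq m; rewrite !mcoef_mderiv; apply: meq_mpair => // x y xy.
by rewrite (permP xy) (permPl (perm_rem k xy)).
Qed.

Lemma mderiv_mmul k p q : meq (mderiv k (mmul p q))
  (madd (mmul (mderiv k p) q) (mmul p (mderiv k q))).
Proof.
move=> m; rewrite mcoef_cat !mcoef_mmul mcoefE /mderiv big_map.
rewrite big_allpairs_dep big_map -big_split /=; apply: eq_bigr => a _.
rewrite big_map -big_split /=; apply: eq_bigr => b _ /=.
rewrite rem_cat count_cat natrD.
have [ka|/count_memPn->] := boolP (k \in a.2); last by ring.
have [kb|/count_memPn->] := boolP (k \in b.2); last by ring.
suff /permPl-> : perm_eq (a.2 ++ rem k b.2) (rem k a.2 ++ b.2) by ring.
apply: perm_trans (perm_cat (perm_to_rem ka) (perm_refl _)) _.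
rewrite perm_sym; apply: perm_trans (perm_cat (perm_refl _) (perm_to_rem kb)) _.
by rewrite -[k :: rem k b.2]cat1s perm_catCA.
Qed.

Definition zderiv (k : nat) (x : M1) : M1 := pi (mderiv k (repr x)).

Lemma pi_mderiv k p : pi (mderiv k p) = zderiv k (pi p).
Proof. by apply/eqpiP/mderiv_cong/meq_sym/repr_meq. Qed.

Section Derivation.
Variable k : nat.

Lemma zderivB : zmod_morphism (zderiv k).
Proof.
elim/quotW=> x; elim/quotW=> y.
rewrite -(piN y) -piD -!pi_mderiv -piN -piD.
by congr pi; rewrite /mderiv /madd /mscale map_cat -!map_comp; congr (_ ++ _);
  apply: eq_map => t /=; rewrite mulrCA.
Qed.
HB.instance Definition _ := GRing.isZmodMorphism.Build M1 M1 (zderiv k) zderivB.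

Lemma zderivM x y : zderiv k (x * y) = zderiv k x * y + x * zderiv k y.
Proof.
elim/quotW: x => x; elim/quotW: y => y.
by rewrite -piM -!pi_mderiv -!piM -piD; apply/eqpiP/mderiv_mmul.
Qed.

Lemma zderiv_const c : zderiv k (mconst c) = 0.
Proof. by rewrite -pi_mderiv /mderiv /= mul0r -/(mconst 0) raddf0. Qed.

Lemma zderiv_constM c x : zderiv k (mconst c * x) = mconst c * zderiv k x.
Proof. by rewrite zderivM zderiv_const mul0r add0r. Qed.

Hypotheses (k_odd : odd k) (k_ge3 : (3 <= k)%N).

Lemma zderiv_zeta m : zderiv k (pi (zeta_a m)) = (m == k)%:R.
Proof.
rewrite -pi_mderiv /zeta_a; case: ifP => [/andP[m_odd m_gt2]|m_even]; last first.
  by have -> : (m == k) = false by apply: contraFF m_even => /eqP->; rewrite k_odd.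
rewrite /mderiv /= addn0 mulr1; case: eqP => // _.
by apply/eqpiP => x; rewrite mcoefE big_seq1 mul0r mcoef0.
Qed.

End Derivation.

Lemma mconstC_mul (c d : rat) : (c * d)%:C = c%:C * d%:C.
Proof. by rewrite rmorphM polyCM. Qed.

(** * Truncated power series *)

Section Truncation.
Variable N : nat.

Definition eqmodXn (p q : {poly M1}) := forall s, (s < N)%N -> p`_s = q`_s.

Lemma eqmodXn_sym p q : eqmodXn p q -> eqmodXn q p.
Proof. by move=> pq s sN; rewrite pq. Qed.

Lemma eqmodXn_trans p q r : eqmodXn p q -> eqmodXn q r -> eqmodXn p r.
Proof. by move=> pq qr s sN; rewrite pq ?qr. Qed.

Lemma eqmodXnD p p' q q' : eqmodXn p p' -> eqmodXn q q' -> eqmodXn (p + q) (p' + q').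
Proof. by move=> pp' qq' s sN; rewrite !coefD pp' ?qq'. Qed.

Lemma eqmodXnN p p' : eqmodXn p p' -> eqmodXn (- p) (- p').
Proof. by move=> pp' s sN; rewrite !coefN pp'. Qed.

Lemma eqmodXnM p p' q q' : eqmodXn p p' -> eqmodXn q q' -> eqmodXn (p * q) (p' * q').
Proof.
move=> pp' qq' s sN; rewrite !coefM; apply: eq_bigr => -[j /= js] _.
by rewrite pp' ?qq' //; apply: leq_ltn_trans sN; rewrite ?leq_subr // -ltnS.
Qed.

Lemma eqmodXnMl p q q' : eqmodXn q q' -> eqmodXn (p * q) (p * q').
Proof. exact: eqmodXnM. Qed.

Lemma eqmodXn_sum (I : eqType) (r : seq I) (P : pred I) (F G : I -> {poly M1}) :
  (forall i, i \in r -> P i -> eqmodXn (F i) (G i)) ->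
  eqmodXn (\sum_(i <- r | P i) F i) (\sum_(i <- r | P i) G i).
Proof.
move=> FG s sN; rewrite !coef_sum big_seq_cond [RHS]big_seq_cond.
by apply: eq_bigr => i /andP[ir Pi]; apply: FG.
Qed.

Lemma eqmodXn_mconstK (c : rat) p q :
  c != 0 -> eqmodXn (c%:C * p) (c%:C * q) -> eqmodXn p q.
Proof.
move=> c_neq0 cpq s sN; have := congr1 (GRing.mul (mconst c^-1)) (cpq s sN).
by rewrite !coefCM !mulrA -rmorphM mulVf // rmorph1 !mul1r.
Qed.

Definition trunc (f : pser) : {poly M1} := \poly_(s < N) pi (f s).

Lemma coef_trunc f s : (s < N)%N -> (trunc f)`_s = pi (f s).
Proof. by move=> sN; rewrite coef_poly sN. Qed.

Lemma trunc0 : trunc ps_zero = 0.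
Proof. by apply/polyP => s; rewrite coef_poly coef0; case: ifP. Qed.

Lemma trunc_add f g : trunc (ps_add f g) = trunc f + trunc g.
Proof. by apply/polyP => s; rewrite coefD !coef_poly; case: ifP; rewrite ?addr0 ?piD. Qed.

Lemma trunc_foldr (s : seq pser) : trunc (foldr ps_add ps_zero s) = \sum_(f <- s) trunc f.
Proof. by elim: s => [|f s IHs]; rewrite ?big_nil ?trunc0 // big_cons trunc_add IHs. Qed.

Lemma trunc_scale c f : trunc (ps_scale c f) = c%:C * trunc f.
Proof.
by apply/polyP => s; rewrite coefCM !coef_poly; case: ifP; rewrite ?mulr0 ?pi_mscale.
Qed.

Lemma trunc_mul f g : eqmodXn (trunc (ps_mul f g)) (trunc f * trunc g).
Proof.
move=> s sN; rewrite coefM coef_trunc // pi_msum big_map.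
rewrite -(big_mkord xpredT (fun j => (trunc f)`_j * (trunc g)`_(s - j))).
rewrite /index_iota subn0; apply: eq_big_seq => j; rewrite mem_iota add0n => /andP[_ js].
by rewrite piM !coef_trunc //; apply: leq_ltn_trans sN; rewrite ?leq_subr // -ltnS.
Qed.

Lemma trunc_Tpow k f : eqmodXn (trunc (ps_Tpow k f)) ('X^k * trunc f).
Proof.
move=> s sN; rewrite coefXnM coef_trunc // /ps_Tpow ltnNge.
by case: leqP => // _; rewrite coef_trunc // (leq_ltn_trans (leq_subr _ _) sN).
Qed.

End Truncation.

Local Notation zderivp k := (map_poly (zderiv k)).

Section PolyDerivation.
Variable k : nat.

Lemma zderivpM p q : zderivp k (p * q) = zderivp k p * q + p * zderivp k q.
Proof.
apply/polyP => s; rewrite coefD coef_map !coefM raddf_sum -big_split /=.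
by apply: eq_bigr => j _; rewrite zderivM !coef_map.
Qed.

Lemma zderivp_constM c p : zderivp k (c%:C * p) = c%:C * zderivp k p.
Proof. by rewrite zderivpM map_polyC /= zderiv_const mul0r add0r. Qed.

Lemma zderivp_XnM j p : zderivp k ('X^j * p) = 'X^j * zderivp k p.
Proof. by apply/polyP => s; rewrite coef_map !coefXnM; case: ifP; rewrite ?raddf0 ?coef_map. Qed.

Lemma eqmodXn_zderivp N p q : eqmodXn N p q -> eqmodXn N (zderivp k p) (zderivp k q).
Proof. by move=> pq s sN; rewrite !coef_map pq. Qed.

Lemma trunc_deriv N f : trunc N (ps_deriv k f) = zderivp k (trunc N f).
Proof.
by apply/polyP => s; rewrite coef_map !coef_poly; case: ifP; rewrite ?raddf0 ?pi_mderiv.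
Qed.

End PolyDerivation.

(** * Newton's recursion for [H(1^j)] *)

Lemma size_H1seq m : size (H1seq m) = m.+1.
Proof. by elim: m => [|m IHm] //=; rewrite size_rcons IHm. Qed.

Lemma nth_H1seq m j : (j <= m)%N -> nth ps_zero (H1seq m) j = H1 j.
Proof.
elim: m => [|m IHm]; first by rewrite leqn0 => /eqP->.
rewrite leq_eqVlt => /predU1P[-> //|jm].
by rewrite /= nth_rcons size_H1seq jm IHm.
Qed.

Lemma H1S j : H1 j.+1 = ps_scale (j.+1%:R)^-1 (foldr ps_add ps_zero
  [seq ps_scale ((-1) ^+ (i - 1)) (ps_mul (Ha i) (H1 (j.+1 - i))) | i <- iota 1 j.+1]).
Proof.
rewrite {1}/H1 -[H1seq j.+1]/(rcons (H1seq j) _) nth_rcons size_H1seq ltnn eqxx.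
congr (ps_scale _ (foldr _ _ _)); apply/eq_in_map => i; rewrite mem_iota => /andP[i_gt0 _].
by rewrite nth_H1seq // leq_subLR -add1n leq_add2r.
Qed.

Lemma sum_triangle (V : zmodType) J (G : nat -> nat -> V) :
  \sum_(1 <= i < J.+1) \sum_(1 <= l < (J - i).+1) G i l =
  \sum_(1 <= l < J.+1) \sum_(1 <= i < (J - l).+1) G i l.
Proof.
have sum_sub i (F : nat -> V) : \sum_(1 <= l < (J - i).+1) F l =
    \sum_(1 <= l < J.+1) (if (i + l <= J)%N then F l else 0).
  rewrite (@big_cat_nat _ _ _ (J - i).+1 1 J.+1) //=; last by rewrite ltnS leq_subr.
  rewrite [X in _ = _ + X]big_nat_cond [X in _ = _ + X]big1 ?addr0.
    by apply: eq_big_nat => l /andP[l_gt0 li]; rewrite ifT //; lia.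
  by move=> l /andP[/andP[il _] _]; rewrite ifN //; lia.
under eq_bigr do rewrite sum_sub.
rewrite exchange_big_nat; apply: eq_bigr => l _.
by rewrite sum_sub; apply: eq_bigr => i _; rewrite addnC.
Qed.

Section NewtonRecursion.
Variables (k N : nat).
Hypotheses (k_odd : odd k) (k_ge3 : (3 <= k)%N).

Local Notation h i := (trunc N (Ha i)).
Local Notation P j := (trunc N (H1 j)).
Local Notation sgn i := (((-1) ^+ (i - 1))%:C).

(* The cut-off at [k] mirrors that of [dHcoef]: it lets the sums over [l] below run
   up to [j] without a side condition [l < k]. *)
Definition kbinom (l : nat) : rat := if (l < k)%N then 'C(k, l)%:R / k%:R else 0.
Definition dHcoef (i : nat) : rat := if (i < k)%N then (-1) ^+ i * 'C(k.-1, i.-1)%:R else 0.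

Local Notation R j := (\sum_(1 <= l < j.+1) (kbinom l)%:C * ('X^(k - l) * P (j - l))).

Lemma trunc_H1_rec J :
  eqmodXn N (J%:R%:C * P J) (\sum_(1 <= i < J.+1) sgn i * (h i * P (J - i))).
Proof.
case: J => [|j]; first by rewrite big_geq // rmorph0 polyC0 mul0r.
rewrite H1S trunc_scale trunc_foldr big_map mulrA -mconstC_mul mulfV ?pnatr_eq0 // rmorph1 mul1r.
rewrite /index_iota subSS subn0; apply: eqmodXn_sum => i _ _.
by rewrite trunc_scale; apply/eqmodXnMl/trunc_mul.
Qed.

Lemma zderiv_Ha i : (0 < i)%N -> eqmodXn N (zderivp k (h i)) ((dHcoef i)%:C * 'X^(k - i)).
Proof.
move=> i_gt0 s sN; rewrite coef_map coef_trunc // coefCM coefXn /Ha /=.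
have [->|s_gt0] := posnP s.
  rewrite raddf0 /dHcoef; case: ifP => ik; rewrite ?rmorph0 ?mul0r //.
  by rewrite (_ : (0 == k - i)%N = false) ?mulr0 //; lia.
rewrite pi_mscale zderiv_constM zderiv_zeta //.
rewrite /dHcoef; case: ifP => ik.
  have [->|sk] := eqVneq s (k - i)%N; last by rewrite (_ : (i + s == k)%N = false) ?mulr0 //; lia.
  rewrite (_ : (i + (k - i) == k)%N = true) ?eqxx ?mulr1; last by lia.
  by congr (mconst (_ * _%:R)); congr 'C(_, _); lia.
by rewrite (_ : (i + s == k)%N = false) ?rmorph0 ?mulr0 ?mul0r //; lia.
Qed.

Lemma dHcoef_kbinom l : (0 < l)%N -> (-1) ^+ (l - 1) * dHcoef l = - (l%:R * kbinom l).
Proof.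
rewrite /dHcoef /kbinom; case: ifP => lk; last by rewrite !mulr0 oppr0.
case: l lk => // l lk _; rewrite subSS subn0 exprS mulN1r mulNr mulrN mulrA -exprD.
rewrite -signr_odd oddD addbb expr0 mul1r mulrA -natrM -mul_bin_diag natrM mulrC.
by rewrite mulKf // pnatr_eq0 -lt0n (ltn_trans _ lk).
Qed.

Lemma newton_zderiv_Ha J : eqmodXn N
  (\sum_(1 <= i < J.+1) sgn i * (zderivp k (h i) * P (J - i)))
  (- \sum_(1 <= l < J.+1) (l%:R * kbinom l)%:C * ('X^(k - l) * P (J - l))).
Proof.
rewrite -sumrN; apply: eqmodXn_sum => i; rewrite mem_index_iota => /andP[i_gt0 _] _.
apply: eqmodXn_trans (eqmodXnMl _ (eqmodXnM (zderiv_Ha i_gt0) (fun _ _ => erefl))) _.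
by rewrite !mulrA -mconstC_mul dHcoef_kbinom // rmorphN polyCN !mulNr -!mulrA.
Qed.

Lemma newton_zderiv_H1 J :
    (forall j, (j < J)%N -> eqmodXn N (zderivp k (P j)) (- R j)) -> eqmodXn N
  (\sum_(1 <= i < J.+1) sgn i * (h i * zderivp k (P (J - i))))
  (- \sum_(1 <= l < J.+1) ((J - l)%:R * kbinom l)%:C * ('X^(k - l) * P (J - l))).
Proof.
move=> IH; apply: eqmodXn_trans (_ : eqmodXn N _
    (\sum_(1 <= i < J.+1) sgn i * (h i * - R (J - i)))) _.
  apply: eqmodXn_sum => i; rewrite mem_index_iota => /andP[i_gt0 iJ] _.
  by apply/eqmodXnMl/eqmodXnMl/IH; lia.
have -> : \sum_(1 <= i < J.+1) sgn i * (h i * - R (J - i)) = - \sum_(1 <= l < J.+1)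
    (kbinom l)%:C * ('X^(k - l) * \sum_(1 <= i < (J - l).+1) sgn i * (h i * P (J - l - i))).
  transitivity (- \sum_(1 <= i < J.+1) \sum_(1 <= l < (J - i).+1)
      sgn i * (h i * ((kbinom l)%:C * ('X^(k - l) * P (J - i - l))))).
    by rewrite -sumrN; apply: eq_bigr => i _; rewrite !mulrN !big_distrr.
  rewrite sum_triangle; congr (- _); apply: eq_bigr => l _; rewrite !big_distrr /=.
  by apply: eq_bigr => i _; rewrite subnAC; ring.
apply/eqmodXnN/eqmodXn_sum => l _ _.
rewrite (_ : _ * (_ * P _) = (kbinom l)%:C * ('X^(k - l) * ((J - l)%:R%:C * P (J - l)))).
  exact/eqmodXnMl/eqmodXnMl/eqmodXn_sym/trunc_H1_rec.
by rewrite mconstC_mul; ring.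
Qed.

Lemma zderiv_H1 j : eqmodXn N (zderivp k (P j)) (- R j).
Proof.
elim/ltn_ind: j => -[_|J IH].
  have P0 : eqmodXn N (P 0) 1.
    by move=> s sN; rewrite coef_trunc // coef1 /H1 /= /ps_one; case: (s == 0%N).
  apply: eqmodXn_trans (eqmodXn_zderivp _ P0) _ => s _.
  by rewrite big_geq // -polyC1 map_polyC /= -(rmorph1 mconst) zderiv_const oppr0.
apply: (@eqmodXn_mconstK _ J.+1%:R); first by rewrite pnatr_eq0.
rewrite -zderivp_constM; apply: eqmodXn_trans (eqmodXn_zderivp _ (trunc_H1_rec _)) _.
rewrite raddf_sum /=; under eq_bigr do rewrite zderivp_constM zderivpM mulrDr.
rewrite big_split; apply: eqmodXn_trans (eqmodXnD (newton_zderiv_Ha _) (newton_zderiv_H1 IH)) _.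
rewrite -opprD -big_split mulrN big_distrr /=.
apply/eqmodXnN/eqmodXn_sum => l; rewrite mem_index_iota => /andP[_ lJ] _ s _.
congr (_`_s).
by rewrite -mulrDl -!rmorphD -mulrDl -natrD subnKC // !rmorphM -mulrA.
Qed.

End NewtonRecursion.

(** * The series [c_n] *)

Lemma sum_binom_inner (R : pzRingType) (x : R) k : (0 < k)%N ->
  \sum_(1 <= l < k) x ^+ l *+ 'C(k, l) = (x + 1) ^+ k - x ^+ k - 1.
Proof.
move=> k_gt0; rewrite exprD1n -(big_mkord xpredT (fun l => x ^+ l *+ 'C(k, l))).
rewrite big_nat_recr // big_ltn // expr0 bin0 binn !mulr1n.
by rewrite /= addrK [1 + _]addrC addrK.
Qed.

Lemma sum_shift (V : zmodType) M l (G : nat -> V) : (l <= M)%N ->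
  \sum_(0 <= j < M) (if (l <= j)%N then G j else 0) = \sum_(0 <= j < M - l) G (j + l).
Proof.
move=> lM; rewrite (big_cat_nat (leq0n l) lM) /= big_nat_cond big1 ?add0r.
  by rewrite -{1}(add0n l) big_addn; apply: eq_bigr => j _; rewrite leq_addl.
by move=> j /andP[/andP[_ jl] _]; rewrite leqNgt jl.
Qed.

Section ZetaDerivativeOfCn.
Variables (n k N : nat).
Hypotheses (k_odd : odd k) (k_ge3 : (3 <= k)%N).

Local Notation P j := (trunc N (H1 j)).
Local Notation cc j := ((n%:R - 1) ^+ j : rat).
Local Notation S M := (\sum_(0 <= j < M) (cc j)%:C * ('X^j * P j)).
Local Notation R j := (\sum_(1 <= l < j.+1) (kbinom k l)%:C * ('X^(k - l) * P (j - l))).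

Lemma trunc_cn M : (N <= M)%N -> eqmodXn N (trunc N (cn n)) (n%:R%:C * S M).
Proof.
move=> NM s sN; rewrite coef_trunc // coefCM /cn pi_mscale pi_msum big_map coef_sum.
congr (_ * _); rewrite (big_cat_nat (leq0n s.+1) (leq_trans sN NM)).
rewrite [X in _ = _ + X]big_nat_cond [X in _ = _ + X]big1 ?addr0; last first.
  by move=> j /andP[/andP[sj _] _]; rewrite coefCM coefXnM sj mulr0.
rewrite -[iota 0 s.+1]/(index_iota 0 s.+1); apply: eq_big_nat => j /andP[_ js].
rewrite pi_mscale coefCM coefXnM ltnNge -ltnS js /= coef_trunc //.
exact: leq_ltn_trans (leq_subr _ _) sN.
Qed.

Lemma sum_kbinom_below j (F : nat -> {poly M1}) :
  \sum_(1 <= l < j.+1) (kbinom k l)%:C * F l =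
  \sum_(1 <= l < k) (if (l <= j)%N then (kbinom k l)%:C * F l else 0).
Proof.
rewrite (@big_nat_widen _ _ _ 1 j.+1 (j.+1 + k)) ?leq_addr //.
rewrite (@big_nat_widen _ _ _ 1 k (j.+1 + k)) ?leq_addl // big_mkcond [RHS]big_mkcond.
apply: eq_bigr => l _ /=; rewrite ltnS; case: (leqP l j) => // lj; case: (ltnP l k) => // kl.
by rewrite /kbinom ltnNge kl rmorph0 mul0r.
Qed.

Lemma cn_exchange M : (k <= M)%N ->
  n%:R%:C * \sum_(0 <= j < M) (cc j)%:C * ('X^j * - R j) =
  - \sum_(1 <= l < k) (kbinom k l * cc l)%:C * ('X^k * (n%:R%:C * S (M - l))).
Proof.
move=> kM; transitivity (- \sum_(1 <= l < k) \sum_(0 <= j < M) (if (l <= j)%N then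
    n%:R%:C * ((cc j)%:C * ('X^j * ((kbinom k l)%:C * ('X^(k - l) * P (j - l))))) else 0)).
  rewrite exchange_big_nat big_distrr -sumrN; apply: eq_bigr => j _.
  rewrite sum_kbinom_below !mulrN !big_distrr /= mulrN big_distrr /=; congr (- _).
  apply: eq_bigr => l _.
  by case: ifP; rewrite ?mulr0.
congr (- _); apply: eq_big_nat => l /andP[l_gt0 lk]; rewrite sum_shift; last by lia.
rewrite !big_distrr /=; apply: eq_bigr => j _.
have Xk : 'X^k = 'X^l * 'X^(k - l) :> {poly M1} by rewrite -exprD subnKC // ltnW.
by rewrite addnK Xk !exprD !mconstC_mul; ring.
Qed.

Lemma zderiv_trunc_cn : eqmodXn N (zderivp k (trunc N (cn n)))
  (- (\sum_(1 <= l < k) kbinom k l * cc l)%:C * ('X^k * trunc N (cn n))).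
Proof.
pose M := (N + k)%N; apply: eqmodXn_trans (eqmodXn_zderivp _ (trunc_cn (leq_addr k N))) _.
rewrite zderivp_constM raddf_sum /=; under eq_bigr do rewrite zderivp_constM zderivp_XnM.
apply: eqmodXn_trans (_ : eqmodXn N _ (n%:R%:C * \sum_(0 <= j < M) (cc j)%:C * ('X^j * - R j))) _.
  by apply/eqmodXnMl/eqmodXn_sum => j _ _; apply/eqmodXnMl/eqmodXnMl/zderiv_H1.
rewrite cn_exchange ?leq_addl // !rmorph_sum mulNr big_distrl /=.
apply/eqmodXnN/eqmodXn_sum => l; rewrite mem_index_iota => /andP[_ lk] _.
by apply/eqmodXnMl/eqmodXnMl/eqmodXn_sym/trunc_cn; rewrite /M; lia.
Qed.

End ZetaDerivativeOfCn.

Lemma sum_kbinom k (x : rat) : (0 < k)%N ->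
  \sum_(1 <= l < k) kbinom k l * (x - 1) ^+ l = (x ^+ k - (x - 1) ^+ k - 1) / k%:R.
Proof.
move=> k_gt0; rewrite -[x in x ^+ k](subrK 1) -sum_binom_inner // mulr_suml.
by apply: eq_big_nat => l /andP[_ lk]; rewrite /kbinom lk mulrAC mulr_natl.
Qed.

Unset Implicit Arguments.
Theorem mainTheorem9 (n k : nat) :
  (0 < n)%N -> odd k -> (3 <= k)%N ->
  ps_eq (ps_deriv k (cn n))
        (ps_scale (- ((n%:R ^+ k - (n%:R - 1) ^+ k - 1) / k%:R))
                  (ps_Tpow k (cn n))).
Proof.
move=> _ k_odd k_ge3 i; pose N := i.+1.
suff eqN : eqmodXn N (trunc N (ps_deriv k (cn n)))
    (trunc N (ps_scale (- ((n%:R ^+ k - (n%:R - 1) ^+ k - 1) / k%:R)) (ps_Tpow k (cn n)))).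
  by have := eqN i (ltnSn i); rewrite !coef_trunc // => /eqpiP.
rewrite trunc_deriv trunc_scale -sum_kbinom ?(leq_trans _ k_ge3) //.
apply: eqmodXn_trans (@zderiv_trunc_cn n k N k_odd k_ge3) _.
by rewrite !rmorphN /=; apply/eqmodXnMl/eqmodXn_sym/trunc_Tpow.
Qed.
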